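(* Let $\epsilon>0$ (or any complex $\epsilon$), $n\in\mathbb{Z}$, and $\vec n=(n,\dots,n)\in\mathbb{Z}^k$. Then $$(\epsilon-z_2)(\epsilon-z_3)\cdots(\epsilon-z_k)\ \overset{\vec n}{\approx}\ \sum_{i=0}^{k-1}c_\epsilon(k,i)(\epsilon-z_1)\cdots(\epsilon-z_i),\qquad c_\epsilon(k,i)=\epsilon^{k-i-1}q^i\frac{(q;q)_{k-1}}{(q;q)_i},$$ where the $i=0$ term of the product is $1$.
   Context: Fix $q\in(0,1)$, $k\ge1$; $(a;q)_n=\prod_{i=0}^{n-1}(1-q^ia)$. For $\vec n\in\mathbb{Z}^k$ and two functions $f,g:\mathbb{C}^k\to\mathbb{C}$, write $f\overset{\vec n}{\approx}g$ if, identically in $\vec z$ (as rational functions), $$\sum_{\sigma\in S_k}\prod_{1\le B<A\le k}\frac{z_{\sigma(A)}-q^{-1}z_{\sigma(B)}}{z_{\sigma(A)}-z_{\sigma(B)}}\prod_{j=1}^k(\epsilon-z_{\sigma(j)})^{n_j}\Big(f(z_{\sigma(1)},\dots,z_{\sigma(k)})-g(z_{\sigma(1)},\dots,z_{\sigma(k)})\Big)=0.$$ *)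

From HB Require Import structures.
From mathcomp Require Import all_boot all_order all_algebra all_fingroup.
Set Implicit Arguments. Unset Strict Implicit. Unset Printing Implicit Defensive.
Import Order.TTheory GRing.Theory Num.Theory.
Local Open Scope ring_scope.

Definition qpoch (C : ringType) (a q : C) (n : nat) : C :=
  \prod_(i < n) (1 - q ^+ i * a).

(* The relation f ~(n-vector) g, stated as an identity of rational functions
   in z: equivalently, vanishing at every point where all denominators are
   nonzero (pairwise distinct coordinates, and z_j <> eps for the possibly
   negative powers (eps - z_j)^{n_j}), a Zariski-dense set. Indices are 0-based:
   z : 'I_k -> C, and (z \o s) is (z_{s(1)},...,z_{s(k)}). *)
Definition approx_rel (C : numClosedFieldType) (q eps : C) (k : nat)
    (nv : 'I_k -> int) (f g : ('I_k -> C) -> C) : Prop :=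
  forall z : 'I_k -> C,
    (forall i j, z i = z j -> i = j) ->
    (forall j, z j != eps) ->
    \sum_(s : 'S_k)
       ((\prod_(A : 'I_k) \prod_(B : 'I_k | (B < A)%N)
            ((z (s A) - q^-1 * z (s B)) / (z (s A) - z (s B))))
        * (\prod_(j : 'I_k) (eps - z (s j)) ^ (nv j))
        * (f (fun j => z (s j)) - g (fun j => z (s j)))) = 0.

Definition c_eps (C : fieldType) (q eps : C) (k i : nat) : C :=
  eps ^+ (k - i - 1) * q ^+ i * qpoch q q (k - 1) / qpoch q q i.

From HB Require Import structures.
From mathcomp Require Import all_boot all_order all_algebra all_fingroup.
From mathcomp Require Import zify ring.
From Stdlib Require Import FunctionalExtensionality.
Import Order.TTheory GRing.Theory Num.Theory.
Local Open Scope ring_scope.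

(* Proof of Lemma 6.6.  Fix z and write  Sym F  for the weighted symmetrization
     Sym F = \sum_s W(s) E(s) F(z o s)
   that occurs in the definition of ~ ; the claim is Sym(LHS) = Sym(RHS), and
   it in fact holds for every z.  Sym is linear in F.
   1. Exchange: if H is invariant under swapping the adjacent coordinates
      m, m+1, then Sym((y_m - q^-1 y_{m+1}) H) = 0, because composing s with
      that transposition flips the sign of the summand.  Hence inside Sym one
      may replace  a - b y_{m+1}  by  a - b q y_m, and, iterating,
      eps - c y_{i+d}  by  eps - c q^d y_i  when H ignores positions i..i+d.
   2. The coefficients c_eps satisfy a q-Pascal recursion in k.
   3. Induction on N: Sym(prod_{0<j<=N} (eps - y_j) R) expands as
      sum_{i<=N} c_eps(N+1,i) Sym(prod_{j<i} (eps - y_j) R), for R ignoring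
      positions 0..N.  The step moves the new factor eps - y_{N+1} down to
      position i and splits it using the recursion of step 2.  The theorem
      is the case N = k-1, R = 1. *)

Definition ignores {C : Type} {k : nat} (lo hi : nat) (H : ('I_k -> C) -> C) : Prop :=
  forall y y' : 'I_k -> C,
    (forall j : 'I_k, (j < lo)%N || (hi <= j)%N -> y j = y' j) -> H y = H y'.

Lemma ignoresW {C : Type} {k lo hi lo' hi' : nat} {H : ('I_k -> C) -> C} :
  (lo <= lo')%N -> (hi' <= hi)%N -> ignores lo hi H -> ignores lo' hi' H.
Proof. by move=> hlo hhi hH y y' e; apply: hH => j hj; apply: e; lia. Qed.

Lemma ignores_tperm {C : Type} {k lo hi : nat} {H : ('I_k -> C) -> C}
    {m1 m2 : 'I_k} :
  ignores lo hi H -> (lo <= m1 < hi)%N -> (lo <= m2 < hi)%N ->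
  forall y, H (fun j => y (tperm m1 m2 j)) = H y.
Proof.
move=> hH /andP[h1 h3] /andP[h2 h4] y; apply: hH => j hj.
by rewrite tpermD //; apply/eqP => e; rewrite -e in hj; lia.
Qed.

Lemma prod_ord_rangeS {C : comPzRingType} {K : nat} (a m : nat)
    (F : 'I_K.+1 -> C) :
  (a <= m)%N -> (m <= K)%N ->
  \prod_(j : 'I_K.+1 | (a <= j < m.+1)%N) F j
  = (\prod_(j : 'I_K.+1 | (a <= j < m)%N) F j) * F (inord m).
Proof.
move=> ham hmK; rewrite (bigD1 (inord m)) /=; last by rewrite inordK //; lia.
rewrite mulrC; congr (_ * _); apply: eq_bigl => j.
by rewrite -val_eqE /= inordK //; apply/idP/idP; lia.
Qed.

Section Symmetrization.
Set Implicit Arguments. Unset Strict Implicit.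
Variables (C : numFieldType) (q eps : C) (K : nat) (n : int).
Variable z : 'I_K.+1 -> C.
Hypothesis q_neq0 : q != 0.
Local Notation k := K.+1.

Definition cross (s : 'S_k) (A B : 'I_k) : C :=
  (z (s A) - q^-1 * z (s B)) / (z (s A) - z (s B)).

Definition weight (s : 'S_k) : C :=
  \prod_(A : 'I_k) \prod_(B : 'I_k | (B < A)%N) cross s A B.

Definition eps_factor (s : 'S_k) : C := \prod_(j : 'I_k) (eps - z (s j)) ^ n.

Definition Sym (F : ('I_k -> C) -> C) : C :=
  \sum_(s : 'S_k) weight s * eps_factor s * F (fun j => z (s j)).

Lemma eq_Sym F G : (forall y, F y = G y) -> Sym F = Sym G.
Proof. by move=> eFG; apply: eq_bigr => s _; rewrite eFG. Qed.

Lemma SymB F G : Sym (fun y => F y - G y) = Sym F - Sym G.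
Proof. by rewrite /Sym -sumrB; apply: eq_bigr => s _; rewrite mulrBr. Qed.

Lemma SymD F G : Sym (fun y => F y + G y) = Sym F + Sym G.
Proof. by rewrite /Sym -big_split; apply: eq_bigr => s _; rewrite mulrDr. Qed.

Lemma SymZ c F : Sym (fun y => c * F y) = c * Sym F.
Proof.
by rewrite /Sym mulr_sumr; apply: eq_bigr => s _; rewrite mulrCA.
Qed.

Lemma Sym_sum m (F : 'I_m -> ('I_k -> C) -> C) :
  Sym (fun y => \sum_(i < m) F i y) = \sum_(i < m) Sym (F i).
Proof. by rewrite /Sym exchange_big; apply: eq_bigr => s _; rewrite mulr_sumr. Qed.

Lemma tperm_adjacent_pairs (m1 m2 A B : 'I_k) : val m2 = (val m1).+1 ->
  ((tperm m1 m2 B < tperm m1 m2 A)%N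
     && ((tperm m1 m2 A, tperm m1 m2 B) != (m2, m1)))
  = ((B < A)%N && ((A, B) != (m2, m1))).
Proof.
move=> hm; have {}hm : nat_of_ord m2 = (nat_of_ord m1).+1 := hm.
have eq_ord (x y : 'I_k) : (x == y) = (nat_of_ord x == nat_of_ord y) by [].
by case: (tpermP m1 m2 A) => [->|->|]; case: (tpermP m1 m2 B) => [->|->|];
  rewrite !xpair_eqE ?eqxx /= ?eq_ord ?hm => *; apply/idP/idP; lia.
Qed.

Lemma weight_split (s : 'S_k) (m1 m2 : 'I_k) : val m2 = (val m1).+1 ->
  weight s = cross s m2 m1
    * \prod_(p : 'I_k * 'I_k | (p.2 < p.1)%N && (p != (m2, m1))) cross s p.1 p.2.
Proof. by move=> hm; rewrite /weight pair_big_dep (bigD1 (m2, m1)) //= hm. Qed.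

(* Composing with the transposition t of m1, m2 = m1+1 keeps the weight up to
   the factor of the pair (m2, m1), and changes the sign of the summand of
   (y_m1 - q^-1 y_m2) H, so its symmetrization vanishes. *)
Lemma Sym_adjacent_kernel (m1 m2 : 'I_k) (H : ('I_k -> C) -> C) :
  val m2 = (val m1).+1 -> (forall y, H (fun j => y (tperm m1 m2 j)) = H y) ->
  Sym (fun y => (y m1 - q^-1 * y m2) * H y) = 0.
Proof.
move=> hm hH; set t := tperm m1 m2.
set T := fun s : 'S_k =>
  weight s * eps_factor s * ((z (s m1) - q^-1 * z (s m2)) * H (fun j => z (s j))).
have T_swap s : T (t * s)%g = - T s.
  have rest_inv :
      \prod_(p : 'I_k * 'I_k | (p.2 < p.1)%N && (p != (m2, m1))) cross (t * s)%g p.1 p.2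
    = \prod_(p : 'I_k * 'I_k | (p.2 < p.1)%N && (p != (m2, m1))) cross s p.1 p.2.
    rewrite (reindex_inj (h := fun p : 'I_k * 'I_k => (t p.1, t p.2))) /=; last first.
      by move=> [a b] [c d] /= [/perm_inj -> /perm_inj ->].
    apply: eq_big => [[A B]|[A B] _] /=; first exact: tperm_adjacent_pairs.
    by rewrite /cross !permM !tpermK.
  have eps_inv : eps_factor (t * s)%g = eps_factor s.
    rewrite /eps_factor (reindex_inj (@perm_inj _ t)).
    by apply: eq_bigr => j _; rewrite permM tpermK.
  have H_inv : H (fun j => z ((t * s)%g j)) = H (fun j => z (s j)).
    rewrite -(hH (fun j => z (s j))); congr H.
    by apply: functional_extensionality => j; rewrite permM.
  rewrite /T !(weight_split _ hm) rest_inv eps_inv H_inv /cross !permM.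
  rewrite /t tpermL tpermR -[z (s m2) - z (s m1)]opprB invrN; ring.
have : \sum_s T s = - \sum_s T s.
  rewrite {1}(reindex_inj (mulgI t)) -sumrN.
  by apply: eq_bigr => s _; rewrite T_swap.
move/eqP; rewrite -subr_eq0 opprK -mulr2n mulrn_eq0 /= => /eqP.
by rewrite /Sym.
Qed.

Lemma Sym_exchange (m1 m2 : 'I_k) (H : ('I_k -> C) -> C) (a b : C) :
  val m2 = (val m1).+1 -> (forall y, H (fun j => y (tperm m1 m2 j)) = H y) ->
  Sym (fun y => (a - b * y m2) * H y) = Sym (fun y => (a - b * q * y m1) * H y).
Proof.
move=> hm hH; apply/eqP; rewrite -subr_eq0 -SymB.
rewrite (@eq_Sym _ (fun y => b * q * ((y m1 - q^-1 * y m2) * H y))).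
  by rewrite SymZ (Sym_adjacent_kernel hm hH) mulr0.
by move=> y; field.
Qed.

Lemma Sym_shift (i d : nat) (c : C) (H : ('I_k -> C) -> C) :
  (i + d < k)%N -> ignores i (i + d).+1 H ->
  Sym (fun y => (eps - c * y (inord (i + d))) * H y)
  = Sym (fun y => (eps - c * q ^+ d * y (inord i)) * H y).
Proof.
elim: d c H => [|d IH] c H hk hH.
  by rewrite addn0; apply: eq_Sym => y; rewrite expr0 mulr1.
have v1 : ((inord (i + d) : 'I_k) : nat) = (i + d)%N by rewrite inordK //; lia.
have v2 : ((inord (i + d.+1) : 'I_k) : nat) = (i + d).+1 by rewrite inordK //; lia.
rewrite (@Sym_exchange (inord (i + d)) (inord (i + d.+1))); first last.
- by move=> y; apply: (ignores_tperm hH); rewrite ?v1 ?v2; lia.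
- by rewrite /= v1 v2.
rewrite IH; [|lia|by apply: ignoresW hH; lia].
by apply: eq_Sym => y; rewrite exprS !mulrA.
Qed.

End Symmetrization.

Section Coefficients.
Set Implicit Arguments. Unset Strict Implicit.
Variables (C : numFieldType) (q eps : C).
Hypotheses (q_gt0 : 0 < q) (q_lt1 : q < 1).

Lemma one_sub_qpow_neq0 m : 1 - q ^+ m.+1 != 0.
Proof. by rewrite subr_eq0 eq_sym lt_eqF // exprn_ilt1 // ltW. Qed.

Lemma qpochS m : qpoch q q m.+1 = qpoch q q m * (1 - q ^+ m.+1).
Proof. by rewrite /qpoch big_ord_recr /= exprSr. Qed.

Lemma qpoch_neq0 m : qpoch q q m != 0.
Proof.
elim: m => [|m IH]; first by rewrite /qpoch big_ord0 oner_neq0.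
by rewrite qpochS mulf_neq0 // one_sub_qpow_neq0.
Qed.

Lemma c_epsE i m :
  c_eps q eps (i + m).+1 i = eps ^+ m * q ^+ i * qpoch q q (i + m) / qpoch q q i.
Proof.
rewrite /c_eps (_ : ((i + m).+1 - i - 1 = m)%N) //; last by lia.
by rewrite subn1.
Qed.

Lemma c_eps_first N :
  c_eps q eps N.+2 0 = c_eps q eps N.+1 0 * ((1 - q ^+ N.+1) * eps).
Proof.
rewrite /c_eps !subn0 !subn1 /= qpochS [qpoch q q 0]/qpoch big_ord0 invr1.
by rewrite !expr0 exprS; ring.
Qed.

Lemma c_eps_pascal i m :
  c_eps q eps (i + m).+2 i.+1 = c_eps q eps (i + m).+1 i * q ^+ m.+1
    + c_eps q eps (i + m).+1 i.+1 * ((1 - q ^+ m) * eps).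
Proof.
have [Qi Qi1] := (qpoch_neq0 i, qpoch_neq0 i.+1).
have := c_epsE i.+1 m; rewrite addSn => ->; rewrite c_epsE.
case: m => [|m].
  by rewrite expr0 subrr mul0r mulr0 addr0 addn0 expr1 exprS; field; rewrite Qi1 Qi.
have := c_epsE i.+1 m; rewrite addSn -addnS => ->.
rewrite [qpoch _ _ (i + _).+1]qpochS (qpochS i) !exprS exprD !exprS; field.
by rewrite -exprS one_sub_qpow_neq0 Qi.
Qed.

Lemma c_eps_regroup N (X : nat -> C) :
  \sum_(i < N.+1) c_eps q eps N.+1 i
      * (q ^+ (N.+1 - i) * X i.+1 + (1 - q ^+ (N.+1 - i)) * eps * X i)
  = \sum_(i < N.+2) c_eps q eps N.+2 i * X i.
Proof.
rewrite [RHS]big_ord_recl /= c_eps_first.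
transitivity (\sum_(i < N.+1) c_eps q eps N.+1 i * q ^+ (N.+1 - i) * X i.+1
   + \sum_(i < N.+2) c_eps q eps N.+1 i * ((1 - q ^+ (N.+1 - i)) * eps) * X i).
  rewrite [X in _ = _ + X]big_ord_recr /= subnn expr0 subrr !(mul0r, mulr0) addr0.
  by rewrite -big_split; apply: eq_bigr => i _ /=; ring.
rewrite [X in _ + X = _]big_ord_recl /= subn0 addrCA -big_split /=; congr (_ + _).
apply: eq_bigr => i _; rewrite /bump /= add1n.
have hi : (i <= N)%N by rewrite -ltnS.
have := c_eps_pascal i (N - i); rewrite subnKC // => ->.
by rewrite subSS subSn //; ring.
Qed.

End Coefficients.

Section MainRecursion.
Set Implicit Arguments. Unset Strict Implicit.
Variables (C : numFieldType) (q eps : C) (K : nat) (n : int).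
Variable z : 'I_K.+1 -> C.
Hypotheses (q_gt0 : 0 < q) (q_lt1 : q < 1).
Local Notation k := K.+1.
Local Notation Sym := (Sym q eps n z).

Definition prefix_prod (i : nat) (y : 'I_k -> C) : C :=
  \prod_(j : 'I_k | (j < i)%N) (eps - y j).

Lemma prefix_prodS (i : nat) (y : 'I_k -> C) :
  (i <= K)%N -> prefix_prod i.+1 y = prefix_prod i y * (eps - y (inord i)).
Proof.
move=> hi; rewrite /prefix_prod.
by rewrite (eq_bigl (fun j : 'I_k => (0 <= j < i.+1)%N)) // prod_ord_rangeS.
Qed.

(* The induction step for one term: the new factor eps - y_{N+1} is moved
   down to position i (gaining q^(N+1-i)) and then split as
   q^d (eps - y_i) + (1 - q^d) eps. *)
Lemma Sym_lower_factor N i (R : ('I_k -> C) -> C) :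
  (i <= N)%N -> (N < K)%N -> ignores 0 N.+2 R ->
  Sym (fun y => prefix_prod i y * ((eps - y (inord N.+1)) * R y))
  = q ^+ (N.+1 - i) * Sym (fun y => prefix_prod i.+1 y * R y)
    + (1 - q ^+ (N.+1 - i)) * eps * Sym (fun y => prefix_prod i y * R y).
Proof.
move=> hi hN hR.
transitivity (Sym (fun y =>
    (eps - 1 * y (inord (i + (N.+1 - i)))) * (prefix_prod i y * R y))).
  by apply: eq_Sym => y; rewrite subnKC ?(leqW hi) // mul1r mulrCA.
rewrite Sym_shift; first last.
- move=> y y' e; rewrite (hR y y') => [|j hj]; last by apply: e; lia.
  by congr (_ * _); apply: eq_bigr => j hj; rewrite e //; lia.
- lia.
- by rewrite gt_eqF.
rewrite -!SymZ -SymD; apply: eq_Sym => y; rewrite prefix_prodS; last by lia.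
by rewrite mul1r; ring.
Qed.

Lemma Sym_expand N (R : ('I_k -> C) -> C) : (N < k)%N -> ignores 0 N.+1 R ->
  Sym (fun y => (\prod_(j : 'I_k | (0 < j < N.+1)%N) (eps - y j)) * R y)
  = \sum_(i < N.+1) c_eps q eps N.+1 i * Sym (fun y => prefix_prod i y * R y).
Proof.
elim: N R => [|N IH] R hN hR.
  rewrite big_ord1 /c_eps /qpoch big_ord0 !expr0 invr1 !mul1r.
  apply: eq_Sym => y; rewrite /prefix_prod !big_pred0 // => j.
  by apply/negbTE/negP; lia.
transitivity (Sym (fun y => (\prod_(j : 'I_k | (0 < j < N.+1)%N) (eps - y j))
    * ((eps - y (inord N.+1)) * R y))).
  by apply: eq_Sym => y; rewrite prod_ord_rangeS // mulrA.
have hR' : ignores 0 N.+1 (fun y => (eps - y (inord N.+1)) * R y).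
  move=> y y' e; rewrite (hR y y') => [|j hj]; last by apply: e; lia.
  by rewrite e // inordK //; lia.
rewrite IH //; last by lia.
rewrite -(c_eps_regroup eps q_gt0 q_lt1 N
  (fun j => Sym (fun y => prefix_prod j y * R y))).
apply: eq_bigr => i _; rewrite Sym_lower_factor //; last by rewrite -ltnS.
Qed.

End MainRecursion.

Theorem lemma6p6 (C : numClosedFieldType) (q eps : C) (k : nat) (n : int) :
  0 < q -> q < 1 -> (1 <= k)%N ->
  approx_rel q eps (fun _ : 'I_k => n)
    (fun w => \prod_(j : 'I_k | (0 < j)%N) (eps - w j))
    (fun w => \sum_(i < k) c_eps q eps k i * \prod_(j : 'I_k | (j < i)%N) (eps - w j)).
Proof.
(* The identity holds for every z. *)
move=> q_gt0 q_lt1; case: k => [//|K] _ z _ _.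
change (Sym q eps n z (fun w => \prod_(j : 'I_K.+1 | (0 < j)%N) (eps - w j)
  - \sum_(i < K.+1) c_eps q eps K.+1 i * prefix_prod eps i w) = 0).
apply/eqP; rewrite SymB subr_eq0; apply/eqP.
transitivity (Sym q eps n z (fun y =>
    (\prod_(j : 'I_K.+1 | (0 < j < K.+1)%N) (eps - y j)) * 1)).
  by apply: eq_Sym => y; rewrite mulr1; apply: eq_bigl => j; rewrite ltn_ord andbT.
rewrite Sym_expand // Sym_sum; apply: eq_bigr => i _.
by rewrite SymZ; congr (_ * _); apply: eq_Sym => y; rewrite mulr1.
Qed.
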